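(* Let $M\ge 1$ and let $I:\mathbb{R}_+^M\to\mathbb{R}_{++}$ be a concave function. Then $I$ is a standard interference function, i.e. (1) for all $\mathbf{x}\in\mathbb{R}_+^M$ and all $\alpha>1$, $\alpha I(\mathbf{x})>I(\alpha\mathbf{x})$; and (2) for all $\mathbf{x}_1,\mathbf{x}_2\in\mathbb{R}_+^M$ with $\mathbf{x}_1\ge\mathbf{x}_2$ (componentwise), $I(\mathbf{x}_1)\ge I(\mathbf{x}_2)$.
   Context: $\mathbb{R}_+$ denotes the nonnegative reals and $\mathbb{R}_{++}$ the strictly positive reals; vector inequalities are componentwise. A function $I:\mathbb{R}_+^M\to\mathbb{R}_{++}$ is called a standard interference function if it satisfies scalability ($\alpha I(\mathbf{x})>I(\alpha\mathbf{x})$ for all $\mathbf{x}\in\mathbb{R}_+^M$, $\alpha>1$) and monotonicity ($I(\mathbf{x}_1)\ge I(\mathbf{x}_2)$ whenever $\mathbf{x}_1\ge\mathbf{x}_2$). *)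

(* Vectors of R^M are rows 'rV[R]_M over an arbitrary
   real field R (the paper's R is the instance of real numbers). *)
From HB Require Import structures.
From mathcomp Require Import all_boot all_order all_algebra.
Set Implicit Arguments. Unset Strict Implicit. Unset Printing Implicit Defensive.
Import Order.TTheory GRing.Theory Num.Theory.
Local Open Scope ring_scope.

Definition nonneg_vec (R : realFieldType) (M : nat) (x : 'rV[R]_M) : Prop :=
  forall i : 'I_M, 0 <= x ord0 i.

Definition vec_ge (R : realFieldType) (M : nat) (x1 x2 : 'rV[R]_M) : Prop :=
  forall i : 'I_M, x2 ord0 i <= x1 ord0 i.

Definition concave_on_orthant (R : realFieldType) (M : nat)
    (I : 'rV[R]_M -> R) : Prop :=
  forall (x y : 'rV[R]_M) (t : R), nonneg_vec x -> nonneg_vec y ->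
    0 <= t -> t <= 1 ->
    t * I x + (1 - t) * I y <= I (t *: x + (1 - t) *: y).

Definition positive_on_orthant (R : realFieldType) (M : nat)
    (I : 'rV[R]_M -> R) : Prop :=
  forall x : 'rV[R]_M, nonneg_vec x -> 0 < I x.

Definition standard_interference (R : realFieldType) (M : nat)
    (I : 'rV[R]_M -> R) : Prop :=
  (forall (x : 'rV[R]_M) (a : R), nonneg_vec x -> 1 < a -> I (a *: x) < a * I x)
  /\ (forall x1 x2 : 'rV[R]_M, nonneg_vec x1 -> nonneg_vec x2 ->
        vec_ge x1 x2 -> I x2 <= I x1).

From HB Require Import structures.
From mathcomp Require Import all_boot all_order all_algebra.
From mathcomp Require Import ring lra.
Import Order.TTheory GRing.Theory Num.Theory.
Local Open Scope ring_scope.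

(* Both properties come from writing a point as a convex combination of two
   other points of the orthant.  Scalability: x = a^-1 (a x) + (1 - a^-1) 0,
   so concavity and I 0 > 0 give a^-1 I (a x) < I x.  Monotonicity: for
   x1 >= x2 and small t > 0, x1 = t w + (1 - t) x2 with
   w = x2 + t^-1 (x1 - x2) still in the orthant, so I x1 >= (1 - t) I x2
   because I w >= 0; letting t -> 0 gives I x1 >= I x2. *)

Section ConcaveOnOrthant.

Variables (R : realFieldType) (M : nat) (I : 'rV[R]_M -> R).
Hypothesis I_concave : concave_on_orthant I.

Lemma nonneg_vec0 : nonneg_vec (0 : 'rV[R]_M).
Proof. by move=> i; rewrite mxE. Qed.

Lemma nonneg_vecZ {a : R} {x : 'rV[R]_M} :
  0 <= a -> nonneg_vec x -> nonneg_vec (a *: x).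
Proof. by move=> a_ge0 x_ge0 i; rewrite mxE mulr_ge0. Qed.

Lemma nonneg_vec_extrapolate {s : R} {x1 x2 : 'rV[R]_M} :
  0 <= s -> nonneg_vec x2 -> vec_ge x1 x2 -> nonneg_vec (x2 + s *: (x1 - x2)).
Proof.
move=> s_ge0 x2_ge0 x12 i; rewrite !mxE addr_ge0 ?x2_ge0 //.
by rewrite mulr_ge0 // subr_ge0 x12.
Qed.

Lemma concave_scale_lt (x : 'rV[R]_M) (a : R) :
  0 < I 0 -> nonneg_vec x -> 1 < a -> I (a *: x) < a * I x.
Proof.
move=> I0_gt0 x_ge0 a_gt1.
have a_gt0 : 0 < a by lra.
have ai_ge0 : 0 <= a^-1 by rewrite invr_ge0 ltW.
have ai_lt1 : a^-1 < 1 by rewrite invf_lt1.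
have := I_concave _ _ _ (nonneg_vecZ (ltW a_gt0) x_ge0) nonneg_vec0 ai_ge0 (ltW ai_lt1).
rewrite scaler0 addr0 scalerA mulVf ?gt_eqF // scale1r => chord.
have : a^-1 * I (a *: x) < I x by nra.
by rewrite -(ltr_pM2l a_gt0) mulrA mulfV ?gt_eqF // mul1r.
Qed.

Lemma concave_ge0_monotone (x1 x2 : 'rV[R]_M) :
  (forall x, nonneg_vec x -> 0 <= I x) ->
  nonneg_vec x1 -> nonneg_vec x2 -> vec_ge x1 x2 -> I x2 <= I x1.
Proof.
move=> I_ge0 x1_ge0 x2_ge0 x12; rewrite leNgt; apply/negP => I12.
have Ix1_ge0 := I_ge0 _ x1_ge0.
have Ix2_gt0 : 0 < I x2 by lra.
(* small enough that (1 - t) * I x2 > I x1 *)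
set t := (I x2 - I x1) / (2 * I x2).
have t_gt0 : 0 < t by rewrite /t divr_gt0 //; lra.
have t_le1 : t <= 1 by rewrite /t ler_pdivrMr; lra.
have tIx2 : t * (2 * I x2) = I x2 - I x1 by rewrite mulfVK // gt_eqF ?mulr_gt0.
have ti_ge0 : 0 <= t^-1 by rewrite invr_ge0 ltW.
have w_ge0 := nonneg_vec_extrapolate ti_ge0 x2_ge0 x12.
have := I_concave _ _ _ w_ge0 x2_ge0 (ltW t_gt0) t_le1.
have -> : t *: (x2 + t^-1 *: (x1 - x2)) + (1 - t) *: x2 = x1.
  by apply/rowP => j; rewrite !mxE; field; rewrite gt_eqF.
have := I_ge0 _ w_ge0; nra.
Qed.

End ConcaveOnOrthant.

Theorem proposition1 (R : realFieldType) (M : nat) (HM : (1 <= M)%N)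
    (I : 'rV[R]_M -> R)
    (Hpos : positive_on_orthant I) (Hconc : concave_on_orthant I) :
  standard_interference I.
Proof.
split=> [x a x_ge0 a_gt1 | x1 x2 x1_ge0 x2_ge0 x12].
- exact: concave_scale_lt (Hpos _ (nonneg_vec0 _ _)) x_ge0 a_gt1.
- by apply: concave_ge0_monotone => // x x_ge0; exact/ltW/Hpos.
Qed.
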